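(* For every labelled sequent $\mathfrak{S}$: if $\mathrm{labCS}^\infty \vdash \mathfrak{S}$, then $\mathcal{M}\Vdash\mathfrak{S}$ for every Carlson model $\mathcal{M}$.
   Context: Formulas: fix a countable set $\mathtt{Prop}$ of propositional atoms; formulas are generated by $A ::= \bot \mid p \mid A \to A \mid \Box A \mid \triangle A$ with $p \in \mathtt{Prop}$. Carlson models: a Carlson model is a tuple $\mathcal{M} = \langle W, \prec, M_0, M_1, V\rangle$ where $W$ is a non-empty set, $\prec \subseteq W\times W$ is transitive and conversely wellfounded (there is no infinite chain $w_0 \prec w_1 \prec \cdots$), $M_0, M_1 \subseteq W$, and $V : \mathtt{Prop} \to \mathcal{P}(W)$. Truth: $\mathcal{M},x \nVdash \bot$; $\mathcal{M},x\Vdash p$ iff $x \in V(p)$; $\mathcal{M},x \Vdash A\to B$ iff $\mathcal{M},x\nVdash A$ or $\mathcal{M},x\Vdash B$; $\mathcal{M},x\Vdash \Box A$ iff $\mathcal{M},y \Vdash A$ for all $y$ with $x \prec y$ and $y \in M_0$; $\mathcal{M},x\Vdash \triangle A$ iff $\mathcal{M},y \Vdash A$ for all $y$ with $x \prec y$ and $y \in M_1$. Labelled sequents: fix a countable set $\mathtt{Lab}$ of labels. A labelled formula is $x:A$ with $x\in\mathtt{Lab}$ and $A$ a formula; a relational atom is $xRy$ or $xSy$ with $x,y \in \mathtt{Lab}$. A sequent $\mathcal{R},\Gamma\Rightarrow\Omega$ consists of a finite multiset $\mathcal{R}$ of relational atoms and finite multisets $\Gamma,\Omega$ of labelled formulas;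 commas denote multiset union. $Lab(\mathfrak{S})$ is the set of labels occurring in $\mathfrak{S}$. Rules of $\mathrm{labCS}^\infty$ (premisses above, conclusion below; $\mathcal{R},\Gamma,\Omega$ arbitrary): (Id) no premiss, conclusion $\mathcal{R},\Gamma,x:p\Rightarrow x:p,\Omega$ with $p\in\mathtt{Prop}$; ($\bot$) no premiss, conclusion $\mathcal{R},\Gamma,x:\bot\Rightarrow\Omega$; ($\to$R) from $\mathcal{R},\Gamma,x:A\Rightarrow x:B,\Omega$ infer $\mathcal{R},\Gamma\Rightarrow x:A\to B,\Omega$; ($\to$L) from $\mathcal{R},\Gamma\Rightarrow x:A,\Omega$ and $\mathcal{R},\Gamma,x:B\Rightarrow\Omega$ infer $\mathcal{R},\Gamma,x:A\to B\Rightarrow\Omega$; ($\Box$R) from $\mathcal{R},xRy,\Gamma\Rightarrow y:A,\Omega$ infer $\mathcal{R},\Gamma\Rightarrow x:\Box A,\Omega$, provided $y$ does not occur in the conclusion; ($\Box$L) from $\mathcal{R},xRy,x:\Box A,y:A,\Gamma\Rightarrow\Omega$ infer $\mathcal{R},xRy,x:\Box A,\Gamma\Rightarrow\Omega$; ($\triangle$R) from $\mathcal{R},xSy,\Gamma\Rightarrow y:A,\Omega$ infer $\mathcal{R},\Gamma\Rightarrow x:\triangle A,\Omega$, provided $y$ does not occur in the conclusion; ($\triangle$L) from $\mathcal{R},xSy,x:\triangle A,y:A,\Gamma\Rightarrow\Omega$ infer $\mathcal{R},xSy,x:\triangle A,\Gamma\Rightarrow\Omega$; ($\mathrm{trans}_{\circ\bullet}$,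 for each $\circ,\bullet\in\{R,S\}$) from $\mathcal{R},x\circ y,y\bullet z,x\bullet z,\Gamma\Rightarrow\Omega$ infer $\mathcal{R},x\circ y,y\bullet z,\Gamma\Rightarrow\Omega$. Proofs: a pre-proof is a possibly infinite tree of sequents in which each node is the conclusion of an instance of a rule whose premisses are exactly its children. A trace along an infinite branch $(\mathfrak{S}_i)_{i<\omega}$ with $\mathfrak{S}_i=\mathcal{R}_i,\Gamma_i\Rightarrow\Omega_i$ is a sequence of labels $(x_i)_{i<\omega}$ such that for each $i$: $x_{i+1}=x_i$, or $x_iRx_{i+1}\in\mathcal{R}_i$, or $x_iSx_{i+1}\in\mathcal{R}_i$. A trace is progressing if it is not eventually constant; a branch is progressing if it has a progressing trace. A proof is a pre-proof in which every branch is either finite or progressing. $\mathrm{labCS}^\infty\vdash\mathfrak{S}$ means there is a proof with root $\mathfrak{S}$. Semantics of sequents: given a sequent $\mathfrak{S}=\mathcal{R},\Gamma\Rightarrow\Omega$ and a Carlson model $\mathcal{M}$, an interpretation is a map $I: Lab(\mathfrak{S})\to W$ such that $xRy\in\mathcal{R}$ implies $I(x)\prec I(y)$ and $I(y)\in M_0$, and $xSy\in\mathcal{R}$ implies $I(x)\prec I(y)$ and $I(y)\in M_1$. $\mathcal{M}\Vdash\mathfrak{S}$ means: for every interpretation $I$ of $\mathfrak{S}$ on $\mathcal{M}$, if $\mathcal{M},I(x)\Vdash A$ for all $x:A\in\Gamma$, then $\mathcal{M},I(y)\Vdash B$ for some $y:B\in\Omega$. *)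

From Stdlib Require Import List Permutation Arith.
Import ListNotations.

Definition atom := nat.
Definition label := nat.

Inductive form : Type :=
| Bot : form
| Var : atom -> form
| Imp : form -> form -> form
| Box : form -> form
| Tri : form -> form.

Record carlson_model : Type := {
  W : Type;
  W_nonempty : inhabited W;
  prec : W -> W -> Prop;
  prec_trans : forall x y z, prec x y -> prec y z -> prec x z;
  prec_cwf : ~ (exists f : nat -> W, forall n, prec (f n) (f (S n)));
  M0 : W -> Prop;
  M1 : W -> Prop;
  V : atom -> W -> Prop
}.

Fixpoint forces (M : carlson_model) (x : W M) (A : form) : Prop :=
  match A with
  | Bot => False
  | Var p => V M p x
  | Imp A B => forces M x A -> forces M x B
  | Box A => forall y, prec M x y -> M0 M y -> forces M y A
  | Tri A => forall y, prec M x y -> M1 M y -> forces M y A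
  end.

Inductive ratom : Type :=
| RR : label -> label -> ratom
| RS : label -> label -> ratom.

Definition lform : Type := (label * form)%type.

(* Multisets are represented by lists; they are identified up to permutation
   (see [seq_perm] below). *)
Record sequent : Type := mkSeq {
  srel : list ratom;
  sant : list lform;
  ssuc : list lform
}.

Definition ratom_labels (r : ratom) : list label :=
  match r with RR x y => [x; y] | RS x y => [x; y] end.

Definition occurs (x : label) (s : sequent) : Prop :=
  (exists r, In r (srel s) /\ In x (ratom_labels r)) \/
  (exists A, In (x, A) (sant s)) \/
  (exists A, In (x, A) (ssuc s)).

(* Rule instances with the conclusion written in a fixed arrangement.
   [rule_inst c ps]: c is the conclusion, ps the list of premisses. *)
Inductive rule_inst : sequent -> list sequent -> Prop :=
| r_id : forall R G O x p,
    rule_inst (mkSeq R ((x, Var p) :: G) ((x, Var p) :: O)) []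
| r_bot : forall R G O x,
    rule_inst (mkSeq R ((x, Bot) :: G) O) []
| r_impR : forall R G O x A B,
    rule_inst (mkSeq R G ((x, Imp A B) :: O))
              [mkSeq R ((x, A) :: G) ((x, B) :: O)]
| r_impL : forall R G O x A B,
    rule_inst (mkSeq R ((x, Imp A B) :: G) O)
              [mkSeq R G ((x, A) :: O); mkSeq R ((x, B) :: G) O]
| r_boxR : forall R G O x y A,
    ~ occurs y (mkSeq R G ((x, Box A) :: O)) ->
    rule_inst (mkSeq R G ((x, Box A) :: O))
              [mkSeq (RR x y :: R) G ((y, A) :: O)]
| r_boxL : forall R G O x y A,
    rule_inst (mkSeq (RR x y :: R) ((x, Box A) :: G) O)
              [mkSeq (RR x y :: R) ((x, Box A) :: (y, A) :: G) O]
| r_triR : forall R G O x y A,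
    ~ occurs y (mkSeq R G ((x, Tri A) :: O)) ->
    rule_inst (mkSeq R G ((x, Tri A) :: O))
              [mkSeq (RS x y :: R) G ((y, A) :: O)]
| r_triL : forall R G O x y A,
    rule_inst (mkSeq (RS x y :: R) ((x, Tri A) :: G) O)
              [mkSeq (RS x y :: R) ((x, Tri A) :: (y, A) :: G) O]
| r_trans_RR : forall R G O x y z,
    rule_inst (mkSeq (RR x y :: RR y z :: R) G O)
              [mkSeq (RR x y :: RR y z :: RR x z :: R) G O]
| r_trans_RS : forall R G O x y z,
    rule_inst (mkSeq (RR x y :: RS y z :: R) G O)
              [mkSeq (RR x y :: RS y z :: RS x z :: R) G O]
| r_trans_SR : forall R G O x y z,
    rule_inst (mkSeq (RS x y :: RR y z :: R) G O)
              [mkSeq (RS x y :: RR y z :: RR x z :: R) G O]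
| r_trans_SS : forall R G O x y z,
    rule_inst (mkSeq (RS x y :: RS y z :: R) G O)
              [mkSeq (RS x y :: RS y z :: RS x z :: R) G O].

Definition seq_perm (s t : sequent) : Prop :=
  Permutation (srel s) (srel t) /\
  Permutation (sant s) (sant t) /\
  Permutation (ssuc s) (ssuc t).

Definition rule_step (c : sequent) (ps : list sequent) : Prop :=
  exists c0 ps0, rule_inst c0 ps0 /\ seq_perm c c0 /\ Forall2 seq_perm ps ps0.

CoInductive ptree : Type :=
| Node : sequent -> list ptree -> ptree.

Definition root (t : ptree) : sequent := match t with Node s _ => s end.
Definition children (t : ptree) : list ptree := match t with Node _ ts => ts end.

Inductive subtree : ptree -> ptree -> Prop :=
| st_refl : forall t, subtree t t
| st_child : forall t u v, In u (children t) -> subtree u v -> subtree t v.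

Definition preproof (t : ptree) : Prop :=
  forall u, subtree t u -> rule_step (root u) (map root (children u)).

Definition inf_branch (t : ptree) (b : nat -> ptree) : Prop :=
  b 0 = t /\ forall i, In (b (S i)) (children (b i)).

Definition trace (b : nat -> ptree) (x : nat -> label) : Prop :=
  forall i, x (S i) = x i \/
            In (RR (x i) (x (S i))) (srel (root (b i))) \/
            In (RS (x i) (x (S i))) (srel (root (b i))).

Definition progressing_trace (b : nat -> ptree) (x : nat -> label) : Prop :=
  trace b x /\ ~ (exists N, forall n, N <= n -> x n = x N).

Definition progressing_branch (b : nat -> ptree) : Prop :=
  exists x, progressing_trace b x.

Definition is_proof (t : ptree) : Prop :=
  preproof t /\ forall b, inf_branch t b -> progressing_branch b.

Definition provable (s : sequent) : Prop :=
  exists t, is_proof t /\ root t = s.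

(* Interpretations are total maps label -> W; only labels of the sequent
   matter, and W is nonempty, so this is equivalent to maps on Lab(S). *)
Definition interpretation (M : carlson_model) (s : sequent) (I : label -> W M) : Prop :=
  forall r, In r (srel s) ->
    match r with
    | RR x y => prec M (I x) (I y) /\ M0 M (I y)
    | RS x y => prec M (I x) (I y) /\ M1 M (I y)
    end.

Definition valid_in (M : carlson_model) (s : sequent) : Prop :=
  forall I : label -> W M, interpretation M s I ->
    (forall x A, In (x, A) (sant s) -> forces M (I x) A) ->
    exists y B, In (y, B) (ssuc s) /\ forces M (I y) B.

(* Soundness by contraposition.  If an interpretation falsifies the conclusion of a
   rule instance, then some premiss is falsified by an interpretation that agrees with
   it on all labels of the conclusion: it is unchanged, except that for (Box R) and
   (Tri R) the fresh label is sent to a witness of the failing modal formula.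
   Iterating from a falsified root yields an infinite branch with such
   interpretations.  Labels persist upwards along the branch, so the values of a
   progressing trace stay put at constant steps and strictly ascend along the
   relational ones; as the latter occur infinitely often, this gives an infinite
   ascending chain, against converse wellfoundedness. *)

From Stdlib Require Import List Permutation Arith Lia Classical ClassicalEpsilon ChoiceFacts.
Import ListNotations.

Lemma Forall2_In_r {A B} (P : A -> B -> Prop) l1 l2 y :
  Forall2 P l1 l2 -> In y l2 -> exists x, In x l1 /\ P x y.
Proof.
  induction 1 as [|a b l1 l2 Hab _ IH]; [intros []|].
  intros [<-|Hy]; [exists a; simpl; auto|].
  destruct (IH Hy) as [x [Hx Hxy]]; exists x; simpl; auto.
Qed.

Lemma dependent_choice_on {A} (P : A -> Prop) (R : A -> A -> Prop) a0 :
  P a0 -> (forall a, P a -> exists a', P a' /\ R a a') ->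
  exists f : nat -> A, f 0 = a0 /\ forall n, P (f n) /\ R (f n) (f (S n)).
Proof.
  intros H0 Hstep.
  assert (Htotal : forall a, exists a', P a -> P a' /\ R a a').
  { intros a; destruct (classic (P a)) as [Ha|Ha].
    - destruct (Hstep a Ha) as [a' Ha']; exists a'; auto.
    - exists a; contradiction. }
  destruct (functional_choice_imp_functional_dependent_choice choice _ Htotal a0)
    as [f [Hf0 Hf]].
  assert (HP : forall n, P (f n)).
  { induction n as [|n IH]; [now rewrite Hf0|apply (Hf n IH)]. }
  exists f; split; [exact Hf0|]; intros n; split; [apply HP|apply (Hf n (HP n))].
Qed.

Lemma not_eventually_constant_changes {A} (x : nat -> A) :
  ~ (exists N, forall n, N <= n -> x n = x N) ->
  forall i, exists j, i <= j /\ x (S j) <> x j.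
Proof.
  intros Hnc i; apply NNPP; intros Hno; apply Hnc; exists i.
  intros n Hn; induction Hn as [|n Hn IH]; [reflexivity|].
  rewrite <- IH; apply NNPP; intros Hne; apply Hno; exists n; auto.
Qed.

Lemma infinite_chain {T} (R : T -> T -> Prop)
    (R_trans : forall a b c, R a b -> R b c -> R a c) (g : nat -> T) N :
  (forall i, N <= i -> g (S i) = g i \/ R (g i) (g (S i))) ->
  (forall i, exists j, i <= j /\ R (g j) (g (S j))) ->
  exists f : nat -> T, forall n, R (f n) (f (S n)).
Proof.
  intros Hweak Hstrict.
  assert (Hmono : forall i k, N <= i -> g (k + i) = g i \/ R (g i) (g (k + i))).
  { intros i k Hi; induction k as [|k IH]; [now left|].
    destruct (Hweak (k + i)) as [E|Hs]; [lia| |]; cbn [Nat.add].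
    - rewrite E; exact IH.
    - right; destruct IH as [E|Hr]; [rewrite <- E; exact Hs|eauto]. }
  assert (Hnext : forall i, N <= i -> exists j, N <= j /\ R (g i) (g j)).
  { intros i Hi; destruct (Hstrict i) as [j [Hij Hj]]; exists (S j); split; [lia|].
    destruct (Hmono i (j - i) Hi) as [E|Hr]; replace (j - i + i) with j in * by lia.
    - rewrite <- E; exact Hj.
    - eauto. }
  destruct (dependent_choice_on (le N) (fun i j => R (g i) (g j)) N (le_n N) Hnext)
    as [f [_ Hf]].
  exists (fun n => g (f n)); intros n; apply Hf.
Qed.

Definition labels (s : sequent) : list label :=
  flat_map ratom_labels (srel s) ++ map fst (sant s) ++ map fst (ssuc s).

Lemma occurs_labels z s : occurs z s <-> In z (labels s).
Proof.
  unfold occurs, labels; rewrite !in_app_iff, in_flat_map, !in_map_iff; split.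
  - intros [Hr|[[A HA]|[A HA]]]; [left; exact Hr|right; left|right; right];
      exists (z, A); auto.
  - intros [Hr|[[[y A] [<- HA]]|[[y A] [<- HA]]]]; eauto.
Qed.

Lemma rule_inst_labels c ps p :
  rule_inst c ps -> In p ps -> incl (labels c) (labels p).
Proof.
  intros Hr Hp z; destruct Hr; simpl in Hp;
    repeat destruct Hp as [<-|Hp]; try contradiction;
    unfold labels; repeat progress (cbn; rewrite ?in_app_iff); tauto.
Qed.

Lemma seq_perm_sym s t : seq_perm s t -> seq_perm t s.
Proof. intros (Hr & Ha & Hs); repeat split; apply Permutation_sym; assumption. Qed.

Lemma occurs_perm s t z : seq_perm s t -> occurs z s -> occurs z t.
Proof.
  intros (Hr & Ha & Hs) [[r [Hin Hz]]|[[A Hin]|[A Hin]]].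
  - left; exists r; split; [eapply Permutation_in; eauto|exact Hz].
  - right; left; exists A; eapply Permutation_in; eauto.
  - right; right; exists A; eapply Permutation_in; eauto.
Qed.

Lemma rule_step_labels c ps p z :
  rule_step c ps -> In p ps -> occurs z c -> occurs z p.
Proof.
  intros (c0 & ps0 & Hr & Hc & Hps) Hp Hz.
  destruct (Forall2_In_r _ _ _ _ (Forall2_flip Hps) Hp) as [p0 [Hp0 Hpp0]].
  apply (occurs_perm p0); [apply seq_perm_sym, Hpp0|].
  apply occurs_labels, (rule_inst_labels c0 ps0); [exact Hr|exact Hp0|].
  apply occurs_labels, (occurs_perm c); assumption.
Qed.

Lemma preproof_child t u : preproof t -> In u (children t) -> preproof u.
Proof. intros Ht Hu v Hv; apply Ht; econstructor; eauto. Qed.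

Lemma inf_branch_preproof t b : preproof t -> inf_branch t b -> forall n, preproof (b n).
Proof.
  intros Ht [Hb0 Hb] n; induction n as [|n IH]; [now rewrite Hb0|].
  exact (preproof_child _ _ IH (Hb n)).
Qed.

Lemma inf_branch_occurs t b n z : preproof t -> inf_branch t b ->
  occurs z (root (b n)) -> occurs z (root (b (S n))).
Proof.
  intros Ht Hb; apply (rule_step_labels _ (map root (children (b n)))).
  - apply (inf_branch_preproof t b Ht Hb n), st_refl.
  - apply in_map, (proj2 Hb).
Qed.

Section Semantics.
Variable M : carlson_model.

Definition holds (I : label -> W M) (r : ratom) : Prop :=
  match r with
  | RR x y => prec M (I x) (I y) /\ M0 M (I y)
  | RS x y => prec M (I x) (I y) /\ M1 M (I y)
  end.

Definition falsifies (s : sequent) (I : label -> W M) : Prop :=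
  Forall (holds I) (srel s) /\
  Forall (fun '(x, A) => forces M (I x) A) (sant s) /\
  Forall (fun '(x, A) => ~ forces M (I x) A) (ssuc s).

Definition agree_on (s : sequent) (I J : label -> W M) : Prop :=
  forall z, occurs z s -> J z = I z.

Definition update (I : label -> W M) (y : label) (w : W M) : label -> W M :=
  fun z => if Nat.eqb z y then w else I z.

Lemma update_eq I y w : update I y w y = w.
Proof. unfold update; now rewrite Nat.eqb_refl. Qed.

Lemma agree_on_update_fresh s I y w : ~ occurs y s -> agree_on s I (update I y w).
Proof.
  intros Hy z Hz; unfold update.
  destruct (Nat.eqb_spec z y) as [->|]; [contradiction|reflexivity].
Qed.

Lemma not_valid_falsifies s : ~ valid_in M s -> exists I, falsifies s I.
Proof.
  intros Hs; apply not_all_ex_not in Hs as [I Hs]; exists I.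
  apply imply_to_and in Hs as [Hi Hs]; apply imply_to_and in Hs as [Ha Hs].
  repeat split; apply Forall_forall.
  - exact Hi.
  - intros [x A]; apply Ha.
  - intros [x A] Hin HA; eauto.
Qed.

Lemma falsifies_perm s t I : seq_perm s t -> falsifies s I -> falsifies t I.
Proof.
  intros (Hr & Ha & Hs) (Fr & Fa & Fs); repeat split; eapply Permutation_Forall; eauto.
Qed.

Lemma falsifies_agree s I J : agree_on s I J -> falsifies s I -> falsifies s J.
Proof.
  intros Hag (Fr & Fa & Fs); repeat split; rewrite Forall_forall in *.
  - intros [x y|x y] Hin; specialize (Fr _ Hin); cbn in *;
      rewrite !Hag by (left; eexists; split; [exact Hin|cbn; auto]); exact Fr.
  - intros [x A] Hin; specialize (Fa _ Hin); cbn in *;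
      rewrite Hag by (right; left; eauto); exact Fa.
  - intros [x A] Hin; specialize (Fs _ Hin); cbn in *;
      rewrite Hag by (right; right; eauto); exact Fs.
Qed.

Lemma modal_right_refutation (K : label -> label -> ratom) (Mi : W M -> Prop)
    (Op : form -> form) R G O x y A I :
  (forall J a b, holds J (K a b) <-> prec M (J a) (J b) /\ Mi (J b)) ->
  (forall w, forces M w (Op A) <-> forall v, prec M w v -> Mi v -> forces M v A) ->
  ~ occurs y (mkSeq R G ((x, Op A) :: O)) -> falsifies (mkSeq R G ((x, Op A) :: O)) I ->
  exists J, falsifies (mkSeq (K x y :: R) G ((y, A) :: O)) J /\
            agree_on (mkSeq R G ((x, Op A) :: O)) I J.
Proof.
  intros HK HOp Hy HI.
  pose proof HI as (_ & _ & Fs); apply Forall_inv in Fs; cbn in Fs; rewrite HOp in Fs.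
  apply not_all_ex_not in Fs as [w Fs].
  apply imply_to_and in Fs as [Hxw Fs]; apply imply_to_and in Fs as [Hw HA].
  pose proof (agree_on_update_fresh _ I y w Hy) as Hag.
  exists (update I y w); split; [|exact Hag].
  destruct (falsifies_agree _ _ _ Hag HI) as (Fr & Fa & Fs); cbn in Fr, Fa, Fs.
  repeat split; [constructor|exact Fa|constructor].
  - apply HK; rewrite update_eq, Hag; [easy|right; right; exists (Op A); now left].
  - exact Fr.
  - cbn; rewrite update_eq; exact HA.
  - exact (Forall_inv_tail Fs).
Qed.

Lemma rule_inst_refutation c ps I : rule_inst c ps -> falsifies c I ->
  exists p J, In p ps /\ falsifies p J /\ agree_on c I J.
Proof.
  intros Hr HI.
  destruct Hr as [R G O x p|R G O x|R G O x A B|R G O x A B|R G O x y A Hy|R G O x y A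
                 |R G O x y A Hy|R G O x y A|R G O x y z|R G O x y z|R G O x y z|R G O x y z].
  all: pose proof HI as (Fr & Fa & Fs); cbn in Fr, Fa, Fs; rewrite ?Forall_cons_iff in Fr;
    rewrite ?Forall_cons_iff in Fa; rewrite ?Forall_cons_iff in Fs; cbn in Fr, Fa, Fs.
  9-12: eexists _, I; split; [now left|split; [|easy]];
    destruct Fr as (Hxy & Hyz & Fr);
    repeat split; cbn; rewrite ?Forall_cons_iff; cbn; intuition; eapply prec_trans; eauto.
  - destruct Fa as [Hp _], Fs as [Hnp _]; contradiction.
  - destruct Fa as [Hbot _]; contradiction.
  - exists (mkSeq R ((x, A) :: G) ((x, B) :: O)), I; split; [now left|split; [|easy]].
    destruct Fs as [HAB Fs]; apply imply_to_and in HAB as [HA HB].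
    repeat split; cbn; rewrite ?Forall_cons_iff; auto.
  - destruct Fa as [HAB Fa].
    destruct (classic (forces M (I x) A)) as [HA|HA].
    + exists (mkSeq R ((x, B) :: G) O), I; split; [now right; left|split; [|easy]].
      repeat split; cbn; rewrite ?Forall_cons_iff; auto.
    + exists (mkSeq R G ((x, A) :: O)), I; split; [now left|split; [|easy]].
      repeat split; cbn; rewrite ?Forall_cons_iff; auto.
  - destruct (modal_right_refutation RR (M0 M) Box R G O x y A I) as [J [HJ Hag]];
      [easy|easy|exact Hy|exact HI|].
    exists (mkSeq (RR x y :: R) G ((y, A) :: O)), J; split; [now left|split; assumption].
  - exists (mkSeq (RR x y :: R) ((x, Box A) :: (y, A) :: G) O), I; split; [now left|split; [|easy]].
    destruct Fr as [Hxy Fr], Fa as [HBox Fa].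
    repeat split; cbn; rewrite ?Forall_cons_iff; cbn; intuition.
  - destruct (modal_right_refutation RS (M1 M) Tri R G O x y A I) as [J [HJ Hag]];
      [easy|easy|exact Hy|exact HI|].
    exists (mkSeq (RS x y :: R) G ((y, A) :: O)), J; split; [now left|split; assumption].
  - exists (mkSeq (RS x y :: R) ((x, Tri A) :: (y, A) :: G) O), I; split; [now left|split; [|easy]].
    destruct Fr as [Hxy Fr], Fa as [HTri Fa].
    repeat split; cbn; rewrite ?Forall_cons_iff; cbn; intuition.
Qed.

Lemma agree_on_perm s t I J : seq_perm s t -> agree_on t I J -> agree_on s I J.
Proof. intros Hst Hag z Hz; apply Hag, (occurs_perm s); assumption. Qed.

Lemma rule_step_refutation c ps I : rule_step c ps -> falsifies c I ->
  exists p J, In p ps /\ falsifies p J /\ agree_on c I J.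
Proof.
  intros (c0 & ps0 & Hr & Hc & Hps) HI.
  destruct (rule_inst_refutation c0 ps0 I Hr (falsifies_perm _ _ _ Hc HI))
    as (p0 & J & Hp0 & HJ & Hag).
  destruct (Forall2_In_r _ _ _ _ Hps Hp0) as [p [Hp Hpp0]].
  exists p, J; split; [exact Hp|split].
  - exact (falsifies_perm _ _ _ (seq_perm_sym _ _ Hpp0) HJ).
  - exact (agree_on_perm _ _ _ _ Hc Hag).
Qed.

Lemma refuting_branch t I : preproof t -> falsifies (root t) I ->
  exists (b : nat -> ptree) (J : nat -> label -> W M), inf_branch t b /\
    forall n, falsifies (root (b n)) (J n) /\ agree_on (root (b n)) (J n) (J (S n)).
Proof.
  intros Ht HI.
  destruct (dependent_choice_on
              (fun a => preproof (fst a) /\ falsifies (root (fst a)) (snd a))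
              (fun a a' => In (fst a') (children (fst a)) /\
                           agree_on (root (fst a)) (snd a) (snd a'))
              (t, I) (conj Ht HI)) as [f [Hf0 Hf]].
  - intros [u J] [Hu HJ]; cbn in *.
    destruct (rule_step_refutation _ _ J (Hu u (st_refl u)) HJ) as (p & J' & Hp & HJ' & Hag).
    apply in_map_iff in Hp as [v [<- Hv]].
    exists (v, J'); cbn; split; [split; [exact (preproof_child u v Hu Hv)|]|]; auto.
  - exists (fun n => fst (f n)), (fun n => snd (f n)); split.
    + split; [now rewrite Hf0|intros n; apply Hf].
    + intros n; split; apply Hf.
Qed.

Lemma refuting_branch_chain t b J x : preproof t -> inf_branch t b ->
  (forall n, falsifies (root (b n)) (J n) /\ agree_on (root (b n)) (J n) (J (S n))) ->
  progressing_trace b x -> exists f : nat -> W M, forall n, prec M (f n) (f (S n)).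
Proof.
  intros Ht Hb HJ [Htr Hnc].
  pose proof (not_eventually_constant_changes x Hnc) as Hchanges.
  assert (Hjump : forall i, x (S i) <> x i ->
            occurs (x i) (root (b i)) /\ occurs (x (S i)) (root (b i)) /\
            prec M (J i (x i)) (J (S i) (x (S i)))).
  { intros i Hne.
    destruct (HJ i) as [[Fr _] Hag]; rewrite Forall_forall in Fr.
    destruct (Htr i) as [E|[Hr|Hr]]; [contradiction| |];
      pose proof (Fr _ Hr) as [Hprec _];
      (assert (Hocc : forall z, In z [x i; x (S i)] -> occurs z (root (b i)))
         by (intros z Hz; left; eexists; split; [exact Hr|exact Hz]));
      rewrite (Hag (x (S i))); auto with datatypes. }
  (* Before its first jump the trace may sit on a label absent from the branch,
     where the interpretations are unconstrained. *)
  destruct (Hchanges 0) as [N [_ HN]].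
  assert (Hocc : forall i, N <= i -> occurs (x i) (root (b i))).
  { intros i Hi; induction Hi as [|i Hi IH]; [apply Hjump, HN|].
    apply (inf_branch_occurs t b i _ Ht Hb).
    destruct (Nat.eq_dec (x (S i)) (x i)) as [->|Hne]; [exact IH|apply Hjump, Hne]. }
  apply (infinite_chain (prec M) (prec_trans M) (fun i => J i (x i)) N).
  - intros i Hi; destruct (Nat.eq_dec (x (S i)) (x i)) as [->|Hne].
    + left; apply (proj2 (HJ i)), Hocc, Hi.
    + right; apply Hjump, Hne.
  - intros i; destruct (Hchanges i) as [j [Hij Hj]]; exists j; split; [exact Hij|].
    apply Hjump, Hj.
Qed.
End Semantics.

Theorem theorem2 : forall s : sequent, provable s -> forall M : carlson_model, valid_in M s.
Proof.
  intros s [t [[Ht Hbranches] <-]] M.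
  apply NNPP; intros Hinvalid.
  destruct (not_valid_falsifies M _ Hinvalid) as [I HI].
  destruct (refuting_branch M t I Ht HI) as (b & J & Hb & HJ).
  destruct (Hbranches b Hb) as [x Hx].
  destruct (refuting_branch_chain M t b J x Ht Hb HJ Hx) as [f Hf].
  exact (prec_cwf M (ex_intro _ f Hf)).
Qed.
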